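(* Let $(n,w)$ be a $\{0,1\}$-instance of TSP with $n\ge1$ and $w(K_n)=d\binom n2$ for some $d\in[0,1]$ satisfying $n^{-1}\le d\le 1-4n^{-1}$. Then there exists an optimal matching $M^*$ of $K_n$ with $w(M^* )\le f(n,d)$, where $$f(n,d)=\begin{cases}\tfrac12 dn-\tfrac18 dn+1 & \text{if } d\le \tfrac{9}{25},\\ \tfrac12 dn-\tfrac18(1-d)^2n+1 & \text{if } d\ge\tfrac{9}{25}.\end{cases}$$
   Context: $K_n=(V_n,E_n)$ is the complete graph on $n$ vertices; a $\{0,1\}$-instance is a weighting $w:E_n\to\{0,1\}$; $w(G)=\sum_{e\in E(G)}w(e)$. An optimal matching of $K_n$ is any set of $\lfloor n/2\rfloor$ pairwise disjoint edges of $K_n$. *)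

From HB Require Import structures.
From mathcomp Require Import all_boot all_order all_algebra.
Set Implicit Arguments. Unset Strict Implicit. Unset Printing Implicit Defensive.
Import Order.TTheory GRing.Theory Num.Theory.

Definition Kn_edges (n : nat) : {set {set 'I_n}} := [set e : {set 'I_n} | #|e| == 2%N].

Definition zero_one_instance (n : nat) (w : {set 'I_n} -> nat) : Prop :=
  forall e : {set 'I_n}, e \in Kn_edges n -> (w e <= 1)%N.

Definition weight (n : nat) (w : {set 'I_n} -> nat) (F : {set {set 'I_n}}) : nat :=
  \sum_(e in F) w e.

Definition optimal_matching (n : nat) (M : {set {set 'I_n}}) : Prop :=
  [/\ M \subset Kn_edges n, trivIset M & #|M| = n./2].

Local Open Scope ring_scope.

Definition f_low (R : realFieldType) (n : nat) (d : R) : R :=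
  2^-1 * d * n%:R - 8^-1 * d * n%:R + 1.
Definition f_high (R : realFieldType) (n : nat) (d : R) : R :=
  2^-1 * d * n%:R - 8^-1 * (1 - d) ^+ 2 * n%:R + 1.

From HB Require Import structures.
From mathcomp Require Import all_boot all_order all_algebra.
From mathcomp Require Import zify ring lra.
Import Order.TTheory GRing.Theory Num.Theory.
Set Implicit Arguments. Unset Strict Implicit. Unset Printing Implicit Defensive.

(* Call an edge light if its weight is 0 and heavy otherwise.  Fix a maximum
   matching M of light edges; it covers 2|M| vertices and leaves a set U of
   u = n - 2|M| vertices uncovered.
   - Pairing the vertices of U arbitrarily completes M to an optimal matching
     of K_n whose weight is at most u/2, since only the new edges can be heavy.
   - Maximality of M forbids augmenting paths of length 1, 3 and 5.  Let the
     rich vertices be the covered vertices with two light neighbours in U;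
     then every edge inside U, between U and the mates of rich vertices, and
     between two such mates is heavy, while every other covered vertex has at
     most one light neighbour in U.  Counting heavy ordered pairs bounds
     2 w(K_n) from below by a quadratic expression in u, |M| and the number t
     of rich vertices.
   - A case analysis on this nat inequality leaves three cases: u <= 1, many
     heavy edges among u + |M| vertices, or u <= |M| + 1 with many heavy edges
     at U; in each case elementary real inequalities give u/2 <= f(n, d). *)

Section FinsetFacts.
Variable T : finType.
Implicit Types (A B C : {set T}) (a b : T).

Lemma disjoint_pointwise A B :
  (forall x, x \in A -> x \in B -> False) -> [disjoint A & B].
Proof.
move=> h; rewrite -setI_eq0; apply/eqP/setP => x; rewrite !inE.
by apply/negbTE/negP => /andP[xA xB]; exact: (h x xA xB).
Qed.

Lemma disjoint_pair a b C :
  [disjoint [set a; b] & C] = (a \notin C) && (b \notin C).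
Proof.
apply/idP/andP => [dis|[aC bC]].
  by split; apply/negP => xC; move: (disjointFl dis xC); rewrite !inE eqxx ?orbT.
by apply: disjoint_pointwise => x; rewrite !inE => /orP[] /eqP -> xC;
  [move: aC | move: bC]; rewrite xC.
Qed.

Lemma disjoint_neq A B : A != set0 -> [disjoint A & B] -> A != B.
Proof.
case/set0Pn=> x xA dis; apply/eqP => eAB; subst B.
by move: (disjointFr dis xA); rewrite xA.
Qed.

Lemma disjoint_two_blocks B1 B2 : B1 != set0 -> [disjoint B1 & B2] ->
  trivIset [set B1; B2] /\ #|[set B1; B2]| = 2.
Proof.
move=> n1 d12; split; last by rewrite cards2 disjoint_neq.
apply/trivIsetP => A C; rewrite !inE.
by case/orP=> /eqP ->; case/orP=> /eqP ->; rewrite ?eqxx // => _;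
  rewrite // disjoint_sym.
Qed.

Lemma disjoint_three_blocks B1 B2 B3 : B1 != set0 -> B2 != set0 ->
  [disjoint B1 & B2] -> [disjoint B1 & B3] -> [disjoint B2 & B3] ->
  trivIset [set B1; B2; B3] /\ #|[set B1; B2; B3]| = 3.
Proof.
move=> n1 n2 d12 d13 d23; split.
  apply/trivIsetP => A C; rewrite !inE -!orbA.
  by case/orP=> [/eqP ->|/orP[]/eqP ->]; case/orP=> [/eqP ->|/orP[]/eqP ->];
    rewrite ?eqxx // => _; rewrite // disjoint_sym.
rewrite [[set B1; B2; B3]]setUC cardsU1 cards2 !inE disjoint_neq //.
by rewrite eq_sym (negbTE (disjoint_neq n1 d13)) eq_sym (negbTE (disjoint_neq n2 d23)).
Qed.

Lemma sum_indicator A (p : pred T) :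
  \sum_(y in A) (p y : nat) = #|[set y in A | p y]|.
Proof.
rewrite -sum1_card [LHS]big_mkcond [RHS]big_mkcond /=.
by apply: eq_bigr => y _; rewrite inE; case: (y \in A); case: (p y).
Qed.

Lemma sum_three_disjoint_le A B C (f : T -> nat) :
  [disjoint A & B] -> [disjoint A & C] -> [disjoint B & C] ->
  \sum_(i in A) f i + \sum_(i in B) f i + \sum_(i in C) f i <= \sum_i f i.
Proof.
move=> dAB dAC dBC.
rewrite [\sum_(i in A) _]big_mkcond [\sum_(i in B) _]big_mkcond.
rewrite [\sum_(i in C) _]big_mkcond -!big_split /=; apply: leq_sum => i _.
have [iA|_] := boolP (i \in A).
  by rewrite (disjointFr dAB iA) (disjointFr dAC iA) !addn0.
have [iB|_] := boolP (i \in B); first by rewrite (disjointFr dBC iB) addn0.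
by case: (i \in C).
Qed.

Lemma split_into_pairs (S : {set T}) : exists P : {set {set T}},
  [/\ {in P, forall B, B \subset S /\ #|B| = 2}, trivIset P & #|P| = #|S|./2].
Proof.
have empty_pairing (S' : {set T}) : #|S'| <= 1 -> exists P : {set {set T}},
    [/\ {in P, forall B, B \subset S' /\ #|B| = 2}, trivIset P & #|P| = #|S'|./2].
  move=> S'1; exists set0; split; first by move=> B; rewrite inE.
    by apply/trivIsetP => A B; rewrite inE.
  by rewrite cards0; move: S'1; case: #|S'| => [|[|]].
elim: {S}#|S| {-2}S (leqnn #|S|) => [|k IH] S Sk; first by apply: empty_pairing; lia.
have [S1|/card_gt1P [x [y [xS yS xy]]]] := leqP #|S| 1; first exact: empty_pairing.
set S' := S :\ x :\ y.
have cardS : #|S| = #|S'|.+2.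
  by rewrite (cardsD1 x S) xS (cardsD1 y (S :\ x)) !inE eq_sym xy yS.
have [|P' [P'_pairs P'_triv P'_card]] := IH S'; first by move: Sk; rewrite cardS; lia.
have dis : {in P', forall B, [disjoint [set x; y] & B]}.
  move=> B /P'_pairs[sB _]; rewrite disjoint_pair.
  by apply/andP; split; apply/negP => /(subsetP sB); rewrite !inE ?eqxx ?andbF.
have P'0 : set0 \notin P'.
  by apply/negP => /P'_pairs[_]; rewrite cards0.
have [P_triv xyP'] := trivIsetU1 dis P'_triv P'0.
exists ([set x; y] |: P'); split => //; last by rewrite cardsU1 xyP' P'_card cardS.
move=> B; rewrite in_setU1 => /orP[/eqP ->|/P'_pairs[sB ->]].
  by rewrite cards2 xy; split => //; apply/subsetP => z; rewrite !inE => /orP[]/eqP->.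
by split => //; apply: subset_trans sB _; apply/subsetP => z; rewrite !inE => /and3P[].
Qed.

End FinsetFacts.

Section LightMatchings.
Variable n : nat.
Variable w : {set 'I_n} -> nat.
Implicit Types (x y a b : 'I_n) (e : {set 'I_n}).

Definition light x y : bool := (x != y) && (w [set x; y] == 0).
Definition heavy x y : bool := (x != y) && (w [set x; y] != 0).
Definition light_edge e : bool := (#|e| == 2) && (w e == 0).
Definition light_matching (M : {set {set 'I_n}}) : bool :=
  [forall e in M, light_edge e] && trivIset M.

Lemma light_sym x y : light x y = light y x.
Proof. by rewrite /light eq_sym setUC. Qed.

Lemma heavy_sym x y : heavy x y = heavy y x.
Proof. by rewrite /heavy eq_sym setUC. Qed.

Lemma heavyE x y : x != y -> heavy x y = ~~ light x y.
Proof. by rewrite /heavy /light => ->. Qed.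

Lemma light_edge_pair x y : light x y -> light_edge [set x; y].
Proof. by case/andP=> xy w0; rewrite /light_edge cards2 xy w0. Qed.

Lemma light_edge_neq0 e : light_edge e -> e != set0.
Proof. by case/andP=> /eqP e2 _; apply/eqP => e0; rewrite e0 cards0 in e2. Qed.

Definition heavy_pairs : nat := \sum_(x : 'I_n) \sum_(y : 'I_n) (heavy x y : nat).

Section Matched.
Variable M : {set {set 'I_n}}.
Hypothesis lightM : light_matching M.
Local Notation V := (cover M).
Local Notation U := (~: cover M).

Lemma matching_edge_light e : e \in M -> light_edge e.
Proof. by case/andP: lightM => /forall_inP light_all _; apply: light_all. Qed.

Lemma matching_trivIset : trivIset M.
Proof. by case/andP: lightM. Qed.

Lemma card_cover : #|V| = 2 * #|M|.
Proof.
rewrite -(eqP matching_trivIset) (eq_bigr (fun _ => 2)).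
  by rewrite sum_nat_const mulnC.
by move=> B /matching_edge_light /andP[/eqP].
Qed.

Lemma card_uncovered : n = #|U| + 2 * #|M|.
Proof. by rewrite -card_cover addnC cardsC card_ord. Qed.

Lemma complete_light_matching : zero_one_instance w ->
  exists M', optimal_matching M' /\ 2 * weight w M' <= #|U|.
Proof.
move=> w01.
have [P [P_pairs P_triv P_card]] := split_into_pairs U.
have disMP B C : B \in M -> C \in P -> [disjoint B & C].
  move=> BM /P_pairs[sC _]; apply: disjoint_pointwise => x xB /(subsetP sC).
  by rewrite inE => /negP; apply; apply/bigcupP; exists B.
have MP0 : M :&: P = set0.
  apply/setP => B; rewrite !inE; apply/negbTE/negP => /andP[BM BP].
  have := disMP B B BM BP; have /P_pairs[_ B2] := BP.
  have /set0Pn[x xB] : B != set0 by apply/eqP => B0; rewrite B0 cards0 in B2.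
  by move/disjointFr/(_ xB); rewrite xB.
have half_shift k v : (k + 2 * v)./2 = k./2 + v.
  by rewrite mul2n halfD odd_double andbF add0n doubleK.
exists (M :|: P); split; first split.
- apply/subsetP => B; rewrite in_setU inE.
  by case/orP=> [/matching_edge_light/andP[]|/P_pairs[_ ->]].
- apply: trivIsetU (matching_trivIset) P_triv _; apply: disjoint_pointwise => x.
  case/bigcupP=> B BM xB /bigcupP[C CP xC].
  by have := disjointFr (disMP B C BM CP) xB; rewrite xC.
- rewrite cardsU MP0 cards0 subn0 P_card.
  by rewrite [in RHS]card_uncovered half_shift addnC.
rewrite /weight (eq_bigl [predU M & P]); last by move=> B; rewrite in_setU.
rewrite bigU -?setI_eq0 ?MP0 //.
rewrite big1 /=; last by move=> B /matching_edge_light/andP[_ /eqP].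
rewrite add0n; apply: (@leq_trans (2 * #|P|)).
  rewrite leq_mul2l -sum1_card; apply/orP; right.
  by apply: leq_sum => B /P_pairs[_ B2]; apply: w01; rewrite inE B2.
by rewrite P_card mul2n -geq_half_double.
Qed.

(* The mate of a covered vertex v: the other end of the edge of M at v
   (a vertex not covered by M is its own mate). *)
Definition mate (v : 'I_n) : 'I_n := odflt v [pick y | [set v; y] \in M].

Lemma cover_mem v C : C \in M -> v \in C -> v \in V.
Proof. by move=> CM vC; apply/bigcupP; exists C. Qed.

Lemma block_unique C1 C2 v :
  C1 \in M -> C2 \in M -> v \in C1 -> v \in C2 -> C1 = C2.
Proof.
move=> C1M C2M vC1 vC2; apply/eqP/negPn/negP => C12.
by have := disjointFr (trivIsetP matching_trivIset C1 C2 C1M C2M C12) vC1; rewrite vC2.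
Qed.

Lemma mate_block v : v \in V -> [set v; mate v] \in M.
Proof.
case/bigcupP => C CM vC.
have [y yM] : exists y, [set v; y] \in M.
  case/andP: (matching_edge_light CM) => /cards2P [a [b [_ eC]]] _.
  move: vC; rewrite eC !inE => /orP[] /eqP ->; first by exists b; rewrite -eC.
  by exists a; rewrite setUC -eC.
rewrite /mate; case: pickP => [//|none].
by move: (none y); rewrite yM.
Qed.

Lemma mate_neq v : v \in V -> v != mate v.
Proof.
by move/mate_block/matching_edge_light => /andP[/eqP]; rewrite cards2; case: (v != _).
Qed.

Lemma mate_eq v y : [set v; y] \in M -> mate v = y.
Proof.
move=> vyM; have vV : v \in V by apply: (cover_mem vyM); rewrite !inE eqxx.
have eB := block_unique vyM (mate_block vV) (setU11 _ _) (setU11 _ _).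
have vy : v != y.
  by move/matching_edge_light: vyM => /andP[/eqP]; rewrite cards2; case: (v != y).
have : y \in [set v; mate v] by rewrite -eB !inE eqxx orbT.
by rewrite !inE eq_sym (negbTE vy) => /eqP.
Qed.

Lemma mateK : involutive mate.
Proof.
move=> v; have [vV|vU] := boolP (v \in V).
  by apply: mate_eq; rewrite setUC; apply: mate_block.
suff fixed : mate v = v by rewrite !fixed.
rewrite /mate; case: pickP => [y vyM|//].
by case/negP: vU; apply: (cover_mem vyM); rewrite !inE eqxx.
Qed.

Lemma mate_cover v : v \in V -> mate v \in V.
Proof. by move=> vV; apply: (cover_mem (mate_block vV)); rewrite !inE eqxx orbT. Qed.

Lemma block_mate v C : C \in M -> v \in C -> C = [set v; mate v].
Proof.
move=> CM vC; apply: (block_unique CM (mate_block (cover_mem CM vC)) vC).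
by rewrite !inE eqxx.
Qed.

Lemma notin_other_block v C : v \in V -> C \in M -> C != [set v; mate v] ->
  (v \notin C) && (mate v \notin C).
Proof.
move=> vV CM CB; apply/andP; split; apply/negP => vC.
  by move: CB; rewrite -(block_mate CM vC) eqxx.
by move: CB; rewrite (block_mate CM vC) mateK setUC eqxx.
Qed.

Lemma uncovered_notin a C : a \in U -> C \in M -> a \notin C.
Proof. by rewrite inE => aU CM; apply/negP => aC; rewrite (cover_mem CM aC) in aU. Qed.

Lemma uncovered_neq a v : a \in U -> v \in V -> a != v.
Proof. by rewrite inE => aU vV; apply/eqP => av; rewrite av vV in aU. Qed.

Section Maximum.
Hypothesis maxM : forall M', light_matching M' -> #|M'| <= #|M|.

(* Exchanging a set D of blocks of M for a larger family P of light edges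
   avoiding the other blocks would produce a larger light matching. *)
Lemma no_augmentation (D P : {set {set 'I_n}}) : D \subset M ->
  {in P, forall B, light_edge B} -> trivIset P ->
  (forall B C, B \in P -> C \in M -> C \notin D -> [disjoint B & C]) ->
  #|D| < #|P| -> False.
Proof.
move=> DM P_light P_triv disPM DP.
have lightM' : light_matching ((M :\: D) :|: P).
  apply/andP; split.
    apply/forall_inP => e; rewrite !inE => /orP[/andP[_]|].
      exact: matching_edge_light.
    exact: P_light.
  apply/trivIsetP => A B; rewrite !inE => A_in B_in AB.
  case/orP: A_in => [/andP[AD AM]|AP]; case/orP: B_in => [/andP[BD BM]|BP].
  - exact: (trivIsetP matching_trivIset).
  - by rewrite disjoint_sym; apply: disPM.
  - exact: disPM.
  - exact: (trivIsetP P_triv).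
have MDP0 : (M :\: D) :&: P = set0.
  apply/setP => B; rewrite !inE; apply/negbTE/negP => /andP[/andP[BD BM] BP].
  have /set0Pn[x xB] := light_edge_neq0 (P_light B BP).
  by have := disjointFr (disPM B B BP BM BD) xB; rewrite xB.
have := maxM lightM'.
rewrite cardsU MDP0 cards0 subn0 cardsD (setIidPr DM).
have := subset_leq_card DM; lia.
Qed.

(* No augmenting path of length 1: U is independent in the light graph. *)
Lemma uncovered_light_free a b : a \in U -> b \in U -> ~~ light a b.
Proof.
move=> aU bU; apply/negP => ab.
apply: (@no_augmentation set0 [set [set a; b]]).
- exact: sub0set.
- by move=> B; rewrite inE => /eqP ->; apply: light_edge_pair.
- exact: trivIset1.
- by move=> B C; rewrite inE => /eqP -> CM _; rewrite disjoint_pair !uncovered_notin.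
- by rewrite cards0 cards1.
Qed.

Lemma no_augmenting_path3 x a b : x \in V -> a \in U -> b \in U -> a != b ->
  light x a -> light (mate x) b -> False.
Proof.
move=> xV aU bU ab xa xb.
have xx' := mate_neq xV.
have dis : [disjoint [set x; a] & [set mate x; b]].
  rewrite disjoint_pair !inE !negb_or xx' (eq_sym x b) (uncovered_neq bU xV).
  by rewrite (uncovered_neq aU (mate_cover xV)) ab.
have [P_triv P_card] := disjoint_two_blocks (light_edge_neq0 (light_edge_pair xa)) dis.
apply: (@no_augmentation [set [set x; mate x]] [set [set x; a]; [set mate x; b]]).
- by rewrite sub1set mate_block.
- by move=> B; rewrite !inE => /orP[] /eqP ->; apply: light_edge_pair.
- exact: P_triv.
- move=> B C; rewrite !inE => BP CM /(notin_other_block xV CM) /andP[xC x'C].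
  by case/orP: BP => /eqP ->; rewrite disjoint_pair ?xC ?x'C !uncovered_notin.
- by rewrite cards1 P_card.
Qed.

Lemma no_augmenting_path5 x x' a b : x \in V -> x' \in V ->
  [set x; mate x] != [set x'; mate x'] -> a \in U -> b \in U -> a != b ->
  light x a -> light x' b -> light (mate x) (mate x') -> False.
Proof.
move=> xV x'V blocks aU bU ab xa x'b mm.
have yV := mate_cover xV; have y'V := mate_cover x'V.
have := notin_other_block x'V (mate_block xV) blocks.
rewrite !inE !negb_or => /andP[/andP[xx' yx'] /andP[xy' yy']].
have d12 : [disjoint [set x; a] & [set mate x; mate x']].
  rewrite disjoint_pair !inE !negb_or mate_neq // (eq_sym x (mate x')) xy'.
  by rewrite (uncovered_neq aU yV) (uncovered_neq aU y'V).
have d13 : [disjoint [set x; a] & [set x'; b]].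
  rewrite disjoint_pair !inE !negb_or (eq_sym x x') xx' (eq_sym x b).
  by rewrite (uncovered_neq bU xV) (uncovered_neq aU x'V) ab.
have d23 : [disjoint [set mate x; mate x'] & [set x'; b]].
  rewrite disjoint_pair !inE !negb_or (eq_sym (mate x) x') yx' (eq_sym (mate x) b).
  by rewrite (uncovered_neq bU yV) eq_sym mate_neq // (eq_sym _ b) (uncovered_neq bU y'V).
have [P_triv P_card] := disjoint_three_blocks
  (light_edge_neq0 (light_edge_pair xa)) (light_edge_neq0 (light_edge_pair mm)) d12 d13 d23.
apply: (@no_augmentation [set [set x; mate x]; [set x'; mate x']]
                         [set [set x; a]; [set mate x; mate x']; [set x'; b]]).
- by rewrite subUset !sub1set !mate_block.
- by move=> B; rewrite !inE -!orbA => /orP[|/orP[]] /eqP ->; apply: light_edge_pair.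
- exact: P_triv.
- move=> B C; rewrite !inE negb_or -!orbA => BP CM /andP[C1 C2].
  have /andP[xC yC] := notin_other_block xV CM C1.
  have /andP[x'C y'C] := notin_other_block x'V CM C2.
  by case/orP: BP => [|/orP[]] /eqP ->; rewrite disjoint_pair ?xC ?yC ?x'C ?y'C ?uncovered_notin.
- by rewrite P_card cards2; case: (_ != _).
Qed.

Definition light_nbrs x := [set a in U | light x a].
Definition rich := [set x | 1 < #|light_nbrs x|].
Definition rich_mates := mate @^-1: rich.
Definition poor := V :\: (rich :|: rich_mates).

Lemma rich_covered x : x \in rich -> x \in V.
Proof.
rewrite inE => /card_gt1P [a [_ [aN _ _]]]; move: aN; rewrite inE => /andP[aU xa].
apply: contraT => xV; have xU : x \in U by rewrite inE.
by move: (uncovered_light_free aU xU); rewrite light_sym xa.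
Qed.

Lemma rich_light_nbr x c : x \in rich -> exists a, [/\ a \in U, light x a & a != c].
Proof.
rewrite inE => /card_gt1P [a1 [a2 [a1N a2N a12]]].
move: a1N a2N; rewrite !in_set => /andP[a1U xa1] /andP[a2U xa2].
have [a1c|a1c] := eqVneq a1 c; last by exists a1; rewrite inE.
by exists a2; split; rewrite ?inE // -a1c eq_sym.
Qed.

(* The mate of a rich vertex has no light neighbour in U (else an augmenting
   path of length 3 appears). *)
Lemma rich_mate_heavy x b : x \in rich -> b \in U -> ~~ light (mate x) b.
Proof.
move=> xR bU; apply/negP => yb.
have [a [aU xa ab]] := rich_light_nbr b xR.
exact: (no_augmenting_path3 (rich_covered xR) aU bU ab xa yb).
Qed.

Lemma rich_not_mate x : x \in rich -> x \in rich_mates -> False.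
Proof.
move=> xR; rewrite inE => yR.
have [b [bU yb _]] := rich_light_nbr x yR.
by move: (rich_mate_heavy xR bU); rewrite yb.
Qed.

Lemma rich_mate_covered y : y \in rich_mates -> y \in V.
Proof. by rewrite inE => /rich_covered /mate_cover; rewrite mateK. Qed.

Lemma rich_mate_heavy_U y b : y \in rich_mates -> b \in U -> heavy y b.
Proof.
move=> yY bU; rewrite heavyE; last first.
  by rewrite eq_sym (uncovered_neq bU (rich_mate_covered yY)).
by move: yY; rewrite inE => /rich_mate_heavy /(_ bU); rewrite mateK.
Qed.

(* Two mates of rich vertices are joined by a heavy edge (else an augmenting
   path of length 5 appears). *)
Lemma rich_mates_heavy y y' : y \in rich_mates -> y' \in rich_mates -> y != y' ->
  heavy y y'.
Proof.
move=> yY y'Y yy'; rewrite heavyE //; apply/negP => light_yy'.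
have xR : mate y \in rich by rewrite inE in yY.
have x'R : mate y' \in rich by rewrite inE in y'Y.
have blocks : [set mate y; mate (mate y)] != [set mate y'; mate (mate y')].
  rewrite !mateK; apply/eqP => eB.
  have : y' \in [set mate y; y] by rewrite eB !inE eqxx orbT.
  rewrite !inE (eq_sym y' y) (negbTE yy') orbF => /eqP y'_eq.
  by apply: (rich_not_mate (x := y')) => //; rewrite y'_eq.
have [a [aU xa _]] := rich_light_nbr y xR.
have [b [bU x'b ba]] := rich_light_nbr a x'R.
apply: (no_augmenting_path5 (rich_covered xR) (rich_covered x'R) blocks aU bU _ xa x'b).
  by rewrite eq_sym.
by rewrite !mateK.
Qed.

Lemma poor_light_nbrs z : z \in poor -> #|light_nbrs z| <= 1.
Proof. by rewrite !inE negb_or => /andP[/andP[/negP zR _] _]; rewrite leqNgt; apply/negP. Qed.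

Lemma poor_covered z : z \in poor -> z \in V.
Proof. by rewrite !inE => /andP[]. Qed.

Lemma disjoint_U_rich_mates : [disjoint U & rich_mates].
Proof. by apply: disjoint_pointwise => x; rewrite inE => /negP xU /rich_mate_covered. Qed.

Lemma disjoint_U_poor : [disjoint U & poor].
Proof. by apply: disjoint_pointwise => x; rewrite inE => /negP xU /poor_covered. Qed.

Lemma disjoint_rich_mates_poor : [disjoint rich_mates & poor].
Proof.
apply: disjoint_pointwise => x xY; rewrite in_setD => /andP[/negP notRY _].
by apply: notRY; rewrite in_setU xY orbT.
Qed.

Lemma heavy_deg_U_U x : x \in U -> \sum_(y in U) (heavy x y : nat) = #|U| - 1.
Proof.
move=> xU; rewrite sum_indicator (cardsD1 x U) xU add1n subSS subn0.
apply: eq_card => y; rewrite !inE.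
case: (eqVneq y x) => [->|yx] /=; first by rewrite /heavy eqxx ?andbF.
case: (boolP (y \in V)) => //= yU.
by rewrite heavyE 1?eq_sym // uncovered_light_free // inE.
Qed.

Lemma heavy_deg_U_rich_mates x : x \in U ->
  \sum_(y in rich_mates) (heavy x y : nat) = #|rich_mates|.
Proof.
move=> xU; rewrite sum_indicator; apply: eq_card => y; rewrite inE.
by case: (boolP (y \in rich_mates)) => //= yY; rewrite heavy_sym rich_mate_heavy_U.
Qed.

Lemma heavy_deg_rich_mates_U x : x \in rich_mates ->
  \sum_(y in U) (heavy x y : nat) = #|U|.
Proof.
move=> xY; rewrite sum_indicator; apply: eq_card => y; rewrite inE.
by case: (boolP (y \in U)) => //= yU; rewrite rich_mate_heavy_U.
Qed.

Lemma heavy_deg_rich_mates x : x \in rich_mates ->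
  \sum_(y in rich_mates) (heavy x y : nat) = #|rich_mates| - 1.
Proof.
move=> xY; rewrite sum_indicator (cardsD1 x rich_mates) xY add1n subSS subn0.
apply: eq_card => y; rewrite in_set in_setD1.
case: (eqVneq y x) => [->|yx] /=; first by rewrite /heavy eqxx ?andbF.
by case: (boolP (y \in rich_mates)) => //= yY; rewrite rich_mates_heavy // eq_sym.
Qed.

Lemma heavy_deg_poor_U z : z \in poor -> #|U| - 1 <= \sum_(y in U) (heavy z y : nat).
Proof.
move=> zZ; rewrite sum_indicator.
have : #|U| <= #|[set y in U | heavy z y]| + #|light_nbrs z|.
  apply: leq_trans (leq_card_setU _ _); apply: subset_leq_card.
  apply/subsetP => y yU; rewrite !inE.
  have zy : z != y by rewrite eq_sym uncovered_neq // poor_covered.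
  by rewrite inE in yU; rewrite yU /= heavyE //; case: (light z y).
by have := poor_light_nbrs zZ; lia.
Qed.

Lemma heavy_pairs_lower_bound :
  #|U| * (#|U| - 1) + 2 * (#|U| * #|rich_mates|) + #|rich_mates| * (#|rich_mates| - 1)
    + 2 * (#|poor| * (#|U| - 1)) <= heavy_pairs.
Proof.
pose degU x := \sum_(y in U) (heavy x y : nat).
pose degY x := \sum_(y in rich_mates) (heavy x y : nat).
pose degZ x := \sum_(y in poor) (heavy x y : nat).
have total : \sum_x (degU x + degY x + degZ x) <= heavy_pairs.
  apply: leq_sum => x _.
  exact: sum_three_disjoint_le disjoint_U_rich_mates disjoint_U_poor disjoint_rich_mates_poor.
have split3 := sum_three_disjoint_le (fun x => degU x + degY x + degZ x)
  disjoint_U_rich_mates disjoint_U_poor disjoint_rich_mates_poor.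
rewrite !big_split /= in total split3.
have UU : \sum_(x in U) degU x = #|U| * (#|U| - 1).
  by rewrite -sum_nat_const; apply: eq_bigr => x; apply: heavy_deg_U_U.
have UY : \sum_(x in U) degY x = #|U| * #|rich_mates|.
  by rewrite -sum_nat_const; apply: eq_bigr => x; apply: heavy_deg_U_rich_mates.
have YU : \sum_(x in rich_mates) degU x = #|U| * #|rich_mates|.
  by rewrite mulnC -sum_nat_const; apply: eq_bigr => x; apply: heavy_deg_rich_mates_U.
have YY : \sum_(x in rich_mates) degY x = #|rich_mates| * (#|rich_mates| - 1).
  by rewrite -sum_nat_const; apply: eq_bigr => x; apply: heavy_deg_rich_mates.
have ZU : #|poor| * (#|U| - 1) <= \sum_(x in poor) degU x.
  by rewrite -sum_nat_const; apply: leq_sum => x; apply: heavy_deg_poor_U.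
have UZ : \sum_(x in U) degZ x = \sum_(x in poor) degU x.
  rewrite exchange_big /=; apply: eq_bigr => x _; apply: eq_bigr => y _.
  by rewrite heavy_sym.
move: total split3 ZU; rewrite UU UY YU YY UZ.
set sZU := \sum_(x in poor) degU x; lia.
Qed.

(* The covered vertices split into rich vertices, their mates and the poor. *)
Lemma card_poor : #|poor| + 2 * #|rich_mates| = 2 * #|M|.
Proof.
have dis : [disjoint rich & rich_mates] by apply: disjoint_pointwise; exact: rich_not_mate.
have sub : rich :|: rich_mates \subset V.
  by apply/subsetP => x; rewrite in_setU => /orP[/rich_covered|/rich_mate_covered].
have card_union : #|rich :|: rich_mates| = 2 * #|rich_mates|.
  have card_mates : #|rich_mates| = #|rich| by apply/card_preimset/(can_inj mateK).
  by rewrite cardsU disjoint_setI0 // cards0 subn0 card_mates addnn -mul2n.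
rewrite -card_cover /poor cardsD (setIidPr sub) card_union subnK //.
by rewrite -card_union subset_leq_card.
Qed.

End Maximum.

End Matched.
End LightMatchings.

Lemma edge_through (n : nat) (x : 'I_n) (e : {set 'I_n}) : #|e| == 2 -> x \in e ->
  exists y, y != x /\ e = [set x; y].
Proof.
case/cards2P => [a [b [ab ->]]]; rewrite !inE => /orP[] /eqP ->.
  by exists b; rewrite eq_sym.
by exists a; rewrite setUC.
Qed.

Lemma sum_ordered_pairs (n : nat) (w : {set 'I_n} -> nat) :
  \sum_(x : 'I_n) \sum_(y : 'I_n) ((x != y) * w [set x; y]) = 2 * weight w (Kn_edges n).
Proof.
have row x : \sum_(y : 'I_n) ((x != y) * w [set x; y]) =
    \sum_(e : {set 'I_n}) (((e \in Kn_edges n) && (x \in e)) * w e).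
  transitivity (\sum_(y | y != x) w [set x; y]).
    rewrite [RHS]big_mkcond; apply: eq_bigr => y _.
    rewrite (eq_sym x y); case: (eqVneq y x) => [->|ne] /=; by rewrite ?mul1n ?mul0n.
  transitivity (\sum_(e | (e \in Kn_edges n) && (x \in e)) w e); last first.
    rewrite [LHS]big_mkcond; apply: eq_bigr => e _.
    by case: (_ && _); rewrite ?mul1n ?mul0n.
  rewrite (partition_big (fun y => [set x; y]) (fun e => (e \in Kn_edges n) && (x \in e))) /=.
    apply: eq_bigr => e /andP[]; rewrite inE => he xe.
    have [y0 [ne ->]] := edge_through he xe.
    rewrite (big_pred1 y0) //.
    move=> y /=; apply/idP/idP.
      case/andP=> yx /eqP e1.
      have : y \in [set x; y0] by rewrite -e1 !inE eqxx orbT.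
      by rewrite !inE (negbTE yx).
    by move/eqP => ->; rewrite ne eqxx.
  by move=> y yx; rewrite !inE eqxx cards2 (eq_sym x y) yx.
rewrite (eq_bigr _ (fun x _ => row x)) exchange_big /=.
rewrite big_distrr /= [RHS]big_mkcond /=.
apply: eq_bigr => e _.
case: (boolP (e \in Kn_edges n)) => he /=; last by rewrite big1.
rewrite -big_distrl /=.
have -> : \sum_(x : 'I_n) (x \in e : nat) = #|e|.
  by rewrite -sum1_card [RHS]big_mkcond /=; apply: eq_bigr => x _; case: (x \in e).
by move: he; rewrite inE => /eqP ->.
Qed.

(* Every heavy ordered pair contributes its (positive) weight, so the heavy
   ordered pairs number at most 2 w(K_n). *)
Lemma heavy_pairs_le (n : nat) (w : {set 'I_n} -> nat) :
  heavy_pairs w <= 2 * weight w (Kn_edges n).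
Proof.
rewrite /heavy_pairs -sum_ordered_pairs; apply: leq_sum => x _; apply: leq_sum => y _.
rewrite /heavy; case: (x != y) => //=.
by case: (eqVneq (w [set x; y]) 0) => //= w0; rewrite mul1n lt0n w0.
Qed.

Lemma maximum_light_matching (n : nat) (w : {set 'I_n} -> nat) :
  exists M, [/\ light_matching w M, n = #|~: cover M| + 2 * #|M| &
    exists t z, z + 2 * t = 2 * #|M| /\
      let u := #|~: cover M| in
      u * (u - 1) + 2 * (u * t) + t * (t - 1) + 2 * (z * (u - 1))
        <= 2 * weight w (Kn_edges n)].
Proof.
have empty : light_matching w set0.
  apply/andP; split; first by apply/forall_inP => e; rewrite inE.
  by apply/trivIsetP => A B; rewrite inE.
have [M lightM maxM] := arg_maxnP (fun M : {set {set 'I_n}} => #|M|) empty.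
exists M; split => //; first exact: (card_uncovered lightM).
exists #|rich_mates w M|, #|poor w M|; split; first exact: (card_poor lightM maxM).
exact: leq_trans (heavy_pairs_lower_bound lightM maxM) (heavy_pairs_le w).
Qed.

Lemma heavy_count_cases (u t z v W : nat) : z + 2 * t = 2 * v ->
  u * (u - 1) + 2 * (u * t) + t * (t - 1) + 2 * (z * (u - 1)) <= 2 * W ->
  [\/ u <= 1, (u + v) * (u + v) <= 2 * W + (u + v)
    | [/\ 2 <= u, u <= v + 1 & u * (2 * v + 1) <= W + (2 * v + 1)]].
Proof.
move=> ztv count; have [u1|u2] := leqP u 1; first by constructor 1.
have [s vts] : exists s, v = t + s by exists (v - t); lia.
have zs : z = 2 * s by lia.
have [b ub] : exists b, u = b + 1 by exists (u - 1); lia.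
subst v z u; rewrite addnK in count.
have t_sq : t * (t - 1) + t = t * t by case: t {ztv count} => //= t; rewrite subn1 /= mulnS addnC.
have [vu|uv] := leqP (t + s + 2) (b + 1).
  constructor 2; have [c bc] : exists c, b = t + s + c + 1 by exists (b - t - s - 1); lia.
  subst b; nia.
constructor 3; split; [lia | lia |].
have [tb|bt] := leqP t b.
  have [c bc] : exists c, b = t + c by exists (b - t); lia.
  subst b; nia.
have [c tc] : exists c, t = b + c + 1 by exists (t - b - 1); lia.
subst t; nia.
Qed.

Lemma double_bin2 (n : nat) : (2 * 'C(n, 2) = n * n.-1)%N.
Proof.
elim: n => [//|n IH]; rewrite binS bin1 mulnDr IH.
by case: n {IH} => [//|n] /=; lia.
Qed.

Local Open Scope ring_scope.

Lemma one_le_f_low (R : realFieldType) (n : nat) (d : R) : 0 <= d -> 1 <= f_low n d.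
Proof.
move=> d0; have dn : 0 <= d * n%:R by rewrite mulr_ge0 ?ler0n.
rewrite /f_low; lra.
Qed.

Lemma one_le_f_high (R : realFieldType) (n : nat) (d : R) :
  9 / 25 <= d -> d <= 1 -> 1 <= f_high n d.
Proof.
move=> d_low d1; have N0 : 0 <= n%:R :> R by rewrite ler0n.
have sq : (1 - d) ^+ 2 <= 16 / 25.
  have : 0 <= (1 - d) * (16 / 25 - (1 - d)) by apply: mulr_ge0; lra.
  rewrite expr2; nra.
have : (1 - d) ^+ 2 * n%:R <= 16 / 25 * n%:R by apply: ler_wpM2r.
rewrite /f_high; nra.
Qed.

Lemma excess_le_f_low (R : realFieldType) (N m d : R) :
  0 <= d -> d <= 9 / 25 -> 1 <= N -> N / 2 <= m -> m * (m - 1) <= d * (N * (N - 1)) ->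
  m - N / 2 <= 2^-1 * d * N - 8^-1 * d * N + 1.
Proof.
move=> d0 d1 N1 Nm mm.
set K := N / 2 + 3 / 8 * d * N + 1.
have KK : d * (N * (N - 1)) <= K * (K - 1).
  have h1 : 0 <= (4 / 9 - d) * (4 - d) by apply: mulr_ge0; lra.
  have h2 : 0 <= N * N * ((4 / 9 - d) * (4 - d)) by apply: mulr_ge0 => //; nra.
  rewrite /K; nra.
suff : m <= K by rewrite /K; lra.
rewrite leNgt; apply/negP => Km.
have dN : 0 <= d * N by apply: mulr_ge0; lra.
have : 0 < (m - K) * (m + K - 1) by apply: mulr_gt0; rewrite /K in Km *; lra.
nra.
Qed.

Lemma excess_le_f_high (R : realFieldType) (N m d : R) :
  9 / 25 <= d -> d <= 1 -> 1 <= N -> N / 2 <= m -> m * (m - 1) <= d * (N * (N - 1)) ->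
  m - N / 2 <= 2^-1 * d * N - 8^-1 * (1 - d) ^+ 2 * N + 1.
Proof.
move=> d0 d1 N1 Nm mm.
move eq_e : (1 - d) => e.
have de : d = 1 - e by rewrite -eq_e; ring.
subst d.
have e0 : 0 <= e by lra.
have e1 : e <= 16 / 25 by lra.
move eq_c : (1 - e / 2 - e ^+ 2 / 8) => c.
have c0 : 0 < c by rewrite -eq_c; nra.
have key : (1 - e) * (N * (N - 1)) <= (N * c + 1) * (N * c).
  have h1 : 0 <= N * N * (e ^+ 3 / 8 + e ^+ 4 / 64).
    apply: mulr_ge0; first nra.
    by apply: addr_ge0; apply: mulr_ge0 => //; try apply: exprn_ge0; lra.
  have c2 : c ^+ 2 = 1 - e + e ^+ 3 / 8 + e ^+ 4 / 64 by rewrite -eq_c; field.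
  have expand : (N * c + 1) * (N * c) - (1 - e) * (N * (N - 1))
      = N * N * (e ^+ 3 / 8 + e ^+ 4 / 64) + N * (c + (1 - e)).
    have -> : (N * c + 1) * (N * c) = N * N * c ^+ 2 + N * c by ring.
    by rewrite c2; ring.
  have : 0 <= N * (c + (1 - e)) by apply: mulr_ge0; lra.
  lra.
suff : m <= N * c + 1 by rewrite -eq_c; lra.
rewrite leNgt; apply/negP => Km.
have cN : 0 <= N * c by apply: mulr_ge0; lra.
have : 0 < (m - (N * c + 1)) * (m + (N * c + 1) - 1) by apply: mulr_gt0; lra.
nra.
Qed.

Lemma half_le_f_low (R : realFieldType) (N u d : R) :
  0 <= d -> 2 <= u -> 3 * u - 2 <= N -> 2 * (u - 1) * (N - u + 1) <= d * (N * (N - 1)) ->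
  u / 2 <= 2^-1 * d * N - 8^-1 * d * N + 1.
Proof.
move=> d0 u2 uN heavy.
have h1 : 0 <= (u - 1) * (N - 3 * u + 2) by apply: mulr_ge0; lra.
have N1 : 0 < N - 1 by lra.
have key : 0 <= (3 / 8 * (d * N) + 1 - u / 2) * (N - 1).
  have -> : (3 / 8 * (d * N) + 1 - u / 2) * (N - 1)
    = 3 / 8 * (d * (N * (N - 1))) + (1 - u / 2) * (N - 1) by ring.
  nra.
have : 0 <= 3 / 8 * (d * N) + 1 - u / 2 by rewrite -(pmulr_lge0 _ N1).
lra.
Qed.

Lemma half_le_f_high (R : realFieldType) (N u d : R) :
  9 / 25 <= d -> d <= 1 -> 2 <= u -> 3 * u - 2 <= N ->
  2 * (u - 1) * (N - u + 1) <= d * (N * (N - 1)) ->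
  u / 2 <= 2^-1 * d * N - 8^-1 * (1 - d) ^+ 2 * N + 1.
Proof.
move=> d0 d1 u2 uN heavy.
have N4 : 4 <= N by lra.
have sq : (1 - d) ^+ 2 * N <= 16 / 25 * (1 - d) * N.
  have : 0 <= (16 / 25 - (1 - d)) * ((1 - d) * N) by apply: mulr_ge0; nra.
  by rewrite expr2; nra.
suff : u / 2 <= 29 / 50 * (d * N) - 2 / 25 * N + 1 by nra.
have dN : 9 / 25 * N <= d * N by nra.
have [small|large] := lerP u (161 / 625 * N + 2); first lra.
have N1 : 0 < N - 1 by lra.
have mid : 0 <= (u - (161 / 625 * N + 2)) * ((N + 2) / 3 - u) by apply: mulr_ge0; lra.
have key : 0 <= (29 / 50 * (d * N) - 2 / 25 * N + 1 - u / 2) * (N - 1).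
  have -> : (29 / 50 * (d * N) - 2 / 25 * N + 1 - u / 2) * (N - 1)
    = 29 / 50 * (d * (N * (N - 1))) - (2 / 25 * N - 1 + u / 2) * (N - 1) by ring.
  nra.
have : 0 <= 29 / 50 * (d * N) - 2 / 25 * N + 1 - u / 2 by rewrite -(pmulr_lge0 _ N1).
lra.
Qed.

Lemma half_uncovered_le_f (R : realFieldType) (n u v W : nat) (d : R) :
  (1 <= n)%N -> n = (u + 2 * v)%N -> W%:R = d * ('C(n, 2))%:R -> 0 <= d <= 1 ->
  [\/ (u <= 1)%N, ((u + v) * (u + v) <= 2 * W + (u + v))%N
    | [/\ (2 <= u)%N, (u <= v + 1)%N & (u * (2 * v + 1) <= W + (2 * v + 1))%N]] ->
  (d <= 9 / 25 -> u%:R / 2 <= f_low n d) /\ (9 / 25 <= d -> u%:R / 2 <= f_high n d).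
Proof.
move=> n1 nuv Wd /andP[d0 d1] cases.
have N1 : 1 <= n%:R :> R by rewrite ler1n.
have Nuv : n%:R = u%:R + 2 * v%:R :> R by rewrite nuv natrD natrM.
have twoW : 2 * W%:R = d * (n%:R * (n%:R - 1)) :> R.
  by rewrite Wd mulrCA -(natrM R 2) double_bin2 natrM -subn1 natrB.
have U0 : 0 <= u%:R :> R by rewrite ler0n.
have V0 : 0 <= v%:R :> R by rewrite ler0n.
case: cases => [u1|dense|[u2 uv sparse]].
- have u_half : u%:R / 2 <= 1 :> R by move: u1; rewrite -(ler_nat R) => ?; lra.
  split => dbound; apply: le_trans u_half _.
    exact: one_le_f_low.
  exact: one_le_f_high.
- have m_def : u%:R / 2 = (u%:R + v%:R) - n%:R / 2 :> R by rewrite Nuv; field.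
  have mm : (u%:R + v%:R) * ((u%:R + v%:R) - 1) <= d * (n%:R * (n%:R - 1)) :> R.
    move: dense; rewrite -(ler_nat R) !natrM !natrD -twoW => ?; nra.
  have Nm : n%:R / 2 <= u%:R + v%:R :> R by rewrite Nuv; lra.
  rewrite m_def; split => dbound.
    exact: excess_le_f_low.
  exact: excess_le_f_high.
- have U2 : 2 <= u%:R :> R by rewrite (ler_nat R 2).
  have uN : 3 * u%:R - 2 <= n%:R :> R.
    by move: uv; rewrite -(ler_nat R) natrD => ?; lra.
  have heavy : 2 * (u%:R - 1) * (n%:R - u%:R + 1) <= d * (n%:R * (n%:R - 1)) :> R.
    move: sparse; rewrite -(ler_nat R) !natrM !natrD -twoW Nuv => ?; nra.
  split => dbound.
    exact: half_le_f_low.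
  exact: half_le_f_high.
Qed.

Theorem proposition5p2 (R : realFieldType) (n : nat) (w : {set 'I_n} -> nat) (d : R) :
  (1 <= n)%N ->
  zero_one_instance w ->
  (weight w (Kn_edges n))%:R = d * ('C(n, 2))%:R ->
  0 <= d <= 1 ->
  (n%:R)^-1 <= d -> d <= 1 - 4 * (n%:R)^-1 ->
  (d <= 9 / 25 ->
     exists M, optimal_matching M /\ (weight w M)%:R <= f_low n d) /\
  (9 / 25 <= d ->
     exists M, optimal_matching M /\ (weight w M)%:R <= f_high n d).
Proof.
move=> n1 w01 density d01 _ _.
have [M [lightM n_eq [t [z [ztv count]]]]] := maximum_light_matching w.
have [M' [optM' weightM']] := complete_light_matching lightM w01.
have [low high] := half_uncovered_le_f n1 n_eq density d01 (heavy_count_cases ztv count).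
have small : (weight w M')%:R <= #|~: cover M|%:R / 2 :> R.
  by move: weightM'; rewrite -(ler_nat R) natrM => ?; lra.
split => dbound; exists M'; split => //; apply: le_trans small _.
  exact: low.
exact: high.
Qed.
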